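(* Let $\mathcal A$ be a complex unital algebra which is purely infinite. Then $\mathcal A$ is (1) simple, i.e. its only two-sided ideals are $\{0\}$ and $\mathcal A$; and (2) properly infinite, i.e. there exist idempotents $p,q\in\mathcal A$ with $p\sim 1_{\mathcal A}$, $q\sim 1_{\mathcal A}$ and $p\perp q$.
   Context: A complex unital algebra $\mathcal A$ is purely infinite if it is not a division algebra and for every non-zero $a\in\mathcal A$ there exist $b,c\in\mathcal A$ with $bac=1_{\mathcal A}$. Two idempotents $p,q$ are (algebraically Murray–von Neumann) equivalent, $p\sim q$, if there exist $a,b\in\mathcal A$ with $p=ab$ and $q=ba$. Idempotents $p,q$ are orthogonal, $p\perp q$, if $pq=0=qp$. *)

From HB Require Import structures.
From mathcomp Require Import all_boot all_order all_algebra.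
From mathcomp Require Import reals.
From mathcomp Require Import complex.
Set Implicit Arguments. Unset Strict Implicit. Unset Printing Implicit Defensive.
Import Order.TTheory GRing.Theory Num.Theory.
Local Open Scope ring_scope.

(* Complex unital algebras: algType over R[i] = complex R for R : realType
   (every realType is a complete archimedean ordered field, i.e. a model of the reals). *)

Section Defs.
Variable (R : realType) (A : algType R[i]).

Definition is_division_algebra : Prop :=
  forall a : A, a != 0 -> exists b : A, a * b = 1 /\ b * a = 1.

Definition purely_infinite : Prop :=
  ~ is_division_algebra /\
  forall a : A, a != 0 -> exists b c : A, b * a * c = 1.

Definition two_sided_ideal (I : A -> Prop) : Prop :=
  [/\ I 0,
      (forall x y, I x -> I y -> I (x + y)),
      (forall (k : R[i]) x, I x -> I (k *: x)),
      (forall a x, I x -> I (a * x)) &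
      (forall a x, I x -> I (x * a))].

Definition simple_algebra : Prop :=
  forall I : A -> Prop, two_sided_ideal I ->
    (forall x, I x <-> x = 0) \/ (forall x, I x).

Definition idempotent (p : A) : Prop := p * p = p.

Definition mvn_equiv (p q : A) : Prop :=
  exists a b : A, p = a * b /\ q = b * a.

Definition orthogonal (p q : A) : Prop := p * q = 0 /\ q * p = 0.

Definition properly_infinite : Prop :=
  exists p q : A, [/\ idempotent p, idempotent q, mvn_equiv p 1,
                      mvn_equiv q 1 & orthogonal p q].
End Defs.

From HB Require Import structures.
From mathcomp Require Import all_boot all_order all_algebra.
From mathcomp Require Import reals.
From mathcomp Require Import complex.
From Stdlib Require Import Classical.
Import GRing.Theory.
Local Open Scope ring_scope.

(* Simplicity: if a two-sided ideal contains some a <> 0, pick b, c with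
   b a c = 1; then 1, hence every element, lies in the ideal.

   Proper infiniteness: since the algebra is not a division algebra, some
   a <> 0 has no two-sided inverse; writing b a c = 1 yields a non-unitary
   isometry, i.e. u, v with u v = 1 and v u <> 1.  Then p := v u is an
   idempotent equivalent to 1, and its defect f := 1 - v u is a nonzero
   idempotent orthogonal to u and v (u f = 0 = f v).  Pure infiniteness
   gives b, c with b f c = 1, so q := (f c)(b f) is an idempotent
   equivalent to 1 that lives in the corner f A f, hence is orthogonal
   to p.  The ring-theoretic steps are proved for an arbitrary ring. *)

Section RingFacts.
Variable R : pzRingType.
Implicit Types a b c f p u v x y : R.

(* A one-sided inverse pair x, y with y x = 1 makes x y an idempotent;
   this produces both idempotents equivalent to 1. *)
Lemma idempotent_of_left_inverse x y : y * x = 1 -> (x * y) * (x * y) = x * y.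
Proof. by move=> yx; rewrite mulrA -(mulrA x) yx mulr1. Qed.

(* If b a c = 1 but a is not invertible, then either (b a, c) or (b, a c)
   is a one-sided inverse pair that is not two-sided: an isometry which
   is not unitary. *)
Lemma nonunitary_isometry a b c :
  b * a * c = 1 -> ~ (exists d, a * d = 1 /\ d * a = 1) ->
  exists u v, u * v = 1 /\ v * u != 1.
Proof.
move=> bac ninv.
have [cba|cba] := eqVneq (c * (b * a)) 1; last first.
  by exists (b * a), c.
have [acb|acb] := eqVneq (a * c * b) 1; last first.
  by exists b, (a * c); rewrite mulrA.
by case: ninv; exists (c * b); rewrite mulrA acb -mulrA.
Qed.

Lemma isometry_defect u v (f := 1 - v * u) :
  u * v = 1 -> [/\ f * f = f, u * f = 0 & f * v = 0].
Proof.
move=> uv.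
have uf : u * f = 0 by rewrite /f mulrBr mulr1 mulrA uv mul1r subrr.
have fv : f * v = 0 by rewrite /f mulrBl mul1r -mulrA uv mulr1 subrr.
by split=> //; rewrite {1}/f mulrBl mul1r -mulrA uf mulr0 subr0.
Qed.

Lemma corner_orthogonal f p x : p * f = 0 -> f * p = 0 ->
  p * (f * x * f) = 0 /\ (f * x * f) * p = 0.
Proof. by move=> pf fp; split; [rewrite !mulrA pf !mul0r | rewrite -mulrA fp mulr0]. Qed.

End RingFacts.

Section PurelyInfinite.
Variables (R : realType) (A : algType R[i]).
Hypothesis piA : purely_infinite A.

(* A two-sided ideal with a nonzero element contains 1, hence everything. *)
Lemma ideal_full_of_nonzero (I : A -> Prop) x :
  two_sided_ideal I -> I x -> x != 0 -> forall y, I y.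
Proof.
move=> [_ _ _ IL IR] Ix xnz y; have [b [c bxc]] := piA.2 x xnz.
by rewrite -[y]mulr1 -bxc; apply/IL/IR/IL.
Qed.

Lemma purely_infinite_simple : simple_algebra A.
Proof.
move=> I idI; have [[x [Ix xnz]]|none] := classic (exists x, I x /\ x != 0).
  by right; apply: ideal_full_of_nonzero Ix xnz.
left=> x; split=> [Ix|->]; last by case: idI.
by apply: NNPP => /eqP xnz; apply: none; exists x.
Qed.

Lemma purely_infinite_isometry : exists u v : A, u * v = 1 /\ v * u != 1.
Proof.
have [a not_inv] := not_all_ex_not _ _ piA.1.
have [anz ninv] := imply_to_and _ _ not_inv.
have [b [c bac]] := piA.2 a anz.
exact: nonunitary_isometry bac ninv.
Qed.

End PurelyInfinite.

Theorem lemma1p2 (R : realType) (A : algType R[i]) :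
  purely_infinite A -> simple_algebra A /\ properly_infinite A.
Proof.
move=> piA; split; first exact: purely_infinite_simple.
have [u [v [uv vu_neq1]]] := @purely_infinite_isometry _ _ piA.
set f := 1 - v * u; have [ff uf fv] : [/\ f * f = f, u * f = 0 & f * v = 0].
  exact: isometry_defect.
have fnz : f != 0 by rewrite subr_eq0 eq_sym.
have [b [c bfc]] := piA.2 f fnz.
have bf_fc : (b * f) * (f * c) = 1 by rewrite mulrA -(mulrA b) ff.
have corner : (f * c) * (b * f) = f * (c * b) * f by rewrite !mulrA.
have [pq qp] : (v * u) * (f * (c * b) * f) = 0 /\ (f * (c * b) * f) * (v * u) = 0.
  by apply: corner_orthogonal; [rewrite -mulrA uf mulr0 | rewrite mulrA fv mul0r].
exists (v * u), ((f * c) * (b * f)); split.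
- exact: idempotent_of_left_inverse uv.
- exact: idempotent_of_left_inverse bf_fc.
- by exists v, u.
- by exists (f * c), (b * f).
- by rewrite /orthogonal corner.
Qed.
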